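(* Fix $0<s\le1$ and let $\rho(s):=e^s/s$. Suppose that for some $\chi$, $G$ is a tight $(\rho(s),\chi)$-bidding profile induced by an integrable function $\phi:(0,1]\to[1,\infty)$. Then \[ \chi\ge e^s\int_0^1 e^{-sx}\phi(x)\,\mathrm{d} x . \]
   Context: Given $1<\chi\le\rho$, a $(\rho,\chi)$-bidding profile is a non-decreasing, left-continuous $G:\mathbb{R}\to(0,\infty)$ with (offset) $G(x)<1$ for $x<0$ and $G(x)\ge1$ for $x>0$; (robustness) $\int_{-\infty}^{x+1}G(t)\,\mathrm{d} t\le\rho G(x)$ for all $x\in\mathbb{R}$; (consistency) $\int_{-\infty}^1G(t)\,\mathrm{d} t\le\chi$. It is tight if additionally $\int_{-\infty}^{x+1}G(t)\,\mathrm{d} t=\rho G(x)$ for all $x\le0$ and $\int_{-\infty}^1G(t)\,\mathrm{d} t=\chi$. It is induced by $\phi:(0,1]\to[1,\infty)$ if $G|_{(0,1]}\equiv\phi$. *)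

From HB Require Import structures.
From mathcomp Require Import all_boot all_order all_algebra.
From mathcomp Require Import all_classical all_reals all_analysis.
Set Implicit Arguments. Unset Strict Implicit. Unset Printing Implicit Defensive.
Import Order.TTheory GRing.Theory Num.Theory.
Import numFieldNormedType.Exports.
Local Open Scope classical_set_scope.
Local Open Scope ring_scope.

Section Bidding.
Context {R : realType}.
Local Notation mu := (@lebesgue_measure R).

Definition rho_s (s : R) : R := expR s / s.

Definition bidding_profile (rho chi : R) (G : R -> R) : Prop :=
  (1 < chi /\ chi <= rho)                                     (* standing assumption *)
  /\ (forall x y, x <= y -> G x <= G y)
  /\ (forall a, G x @[x --> a^'-] --> G a)
  /\ (forall x, 0 < G x)
  /\ ((forall x, x < 0 -> G x < 1) /\ (forall x, 0 < x -> 1 <= G x))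
  /\ (forall x, (\int[mu]_(t in `]-oo, (x + 1)%R]) (G t)%:E <= (rho * G x)%:E)%E)
  /\ (\int[mu]_(t in `]-oo, 1%R]) (G t)%:E <= chi%:E)%E.

Definition tight_bidding_profile (rho chi : R) (G : R -> R) : Prop :=
  bidding_profile rho chi G
  /\ (forall x, x <= 0 ->
         (\int[mu]_(t in `]-oo, (x + 1)%R]) (G t)%:E = (rho * G x)%:E)%E)
  /\ (\int[mu]_(t in `]-oo, 1%R]) (G t)%:E = chi%:E)%E.

Definition induced_by (G phi : R -> R) : Prop :=
  (forall x, 0 < x <= 1 -> 1 <= phi x) /\ (forall x, 0 < x <= 1 -> G x = phi x).

End Bidding.

From HB Require Import structures.
From mathcomp Require Import all_boot all_order all_algebra.
From mathcomp Require Import all_classical all_reals all_analysis.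
From mathcomp Require Import measurable_realfun.
From mathcomp Require Import ring lra.
Import Order.TTheory GRing.Theory Num.Theory.
Import numFieldNormedType.Exports.
Local Open Scope classical_set_scope.
Local Open Scope ring_scope.

(* Write F(x) = int_{-oo}^x G and k(x) = e^{-sx} F(x).  Integrating by parts,
   int_v^w e^{-st} G(t) dt <= k(w) - k(v) + s int_v^w k  for v <= w.
   For t <= 0 tightness reads s F(t+1) = e^s G(t), i.e. e^{-st} G(t) = s k(t+1), so
   on [v, 1] with v <= 0 the integration by parts becomes the delay inequality
     k(v) <= s int_v^{v+1} k - c,   c = int_0^1 e^{-st} G(t) dt - e^{-s} chi.
   If c > 0 then, as s <= 1, the suprema of k on the unit intervals [-n, 1-n]
   decrease by at least c at each step and eventually become negative, although
   k >= 0.  Hence c <= 0, which is the claim divided by e^s. *)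

Section interval_integrals.
Context {R : realType}.
Local Notation mu := (@lebesgue_measure R).
Implicit Types (f : R -> R) (a b c M : R).

Lemma integrable_itv_bounded f a b M : measurable_fun `]a, b] f ->
  (forall x, a < x <= b -> `|f x| <= M) -> mu.-integrable `]a, b] (EFin \o f).
Proof.
move=> mf fM; apply: measurable_bounded_integrable => //.
  by have /= -> := lebesgue_measure_itv `]a, b]; case: ifP => _; rewrite ?ltry.
exists M; split; first by rewrite num_real.
by move=> y /ltW My x /=; rewrite in_itv/= => /fM /le_trans; apply.
Qed.

Lemma Rintegral_itv_cst a b M : a <= b -> \int[mu]_(t in `]a, b]) M = M * (b - a).
Proof.
rewrite le_eqVlt => /predU1P[->|ab].
  by rewrite set_itv_ge ?bnd_simp ?ltxx// Rintegral_set0 subrr mulr0.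
rewrite Rintegral_cst//; have /= -> := lebesgue_measure_itv `]a, b].
by rewrite lte_fin ab -EFinD.
Qed.

Lemma Rintegral_itv_le_cst f a b M : a <= b -> mu.-integrable `]a, b] (EFin \o f) ->
  (forall x, a < x <= b -> f x <= M) -> \int[mu]_(t in `]a, b]) f t <= M * (b - a).
Proof.
move=> ab intf fM; rewrite -Rintegral_itv_cst//.
apply: le_Rintegral => //.
by apply: (@integrable_itv_bounded _ _ _ `|M|) => //; exact: measurable_cst.
Qed.

Lemma Rintegral_itv_ge_cst f a b M : a <= b -> mu.-integrable `]a, b] (EFin \o f) ->
  (forall x, a < x <= b -> M <= f x) -> M * (b - a) <= \int[mu]_(t in `]a, b]) f t.
Proof.
move=> ab intf Mf; rewrite -Rintegral_itv_cst//.
apply: le_Rintegral => //.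
by apply: (@integrable_itv_bounded _ _ _ `|M|) => //; exact: measurable_cst.
Qed.

Lemma Rintegral_itv_split {f a b c} : a <= b -> b <= c ->
  mu.-integrable `]a, c] (EFin \o f) ->
  \int[mu]_(t in `]a, c]) f t =
  \int[mu]_(t in `]a, b]) f t + \int[mu]_(t in `]b, c]) f t.
Proof.
move=> ab bc intf; rewrite -(@Rintegral_itvB R f (BRight a) (BRight c) b intf).
- by rewrite addrC subrK.
- by rewrite bnd_simp.
- by rewrite bnd_simp.
Qed.

Lemma continuous_addr f c : continuous f -> continuous (fun t => f (t + c)).
Proof.
move=> cf x; apply: (@continuous_comp _ _ _ (shift c) f); last exact: cf.
by apply: continuousD; [exact: cvg_id|exact: cst_continuous].
Qed.

Lemma Rintegral_itv_shift f a b c : a <= b -> continuous f ->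
  \int[mu]_(t in `]a, b]) f (t + c) = \int[mu]_(t in `]a + c, b + c]) f t.
Proof.
move=> ab cf.
have d1 : (shift c : R -> R)^`()%classic = cst 1.
  apply/funext => x; rewrite derive1E.
  have : is_derive x (1 : R) (shift c) (1 + 0) by apply: is_deriveD.
  by move=> /@derive_val ->; rewrite addr0.
have csh : continuous (shift c : R -> R) := continuous_addr id c (fun x => cvg_id).
have cfc : continuous (f \o shift c) by exact: continuous_addr.
rewrite /Rintegral; congr fine.
rewrite integral_itv_obnd_cbnd; last first.
  by apply/measurable_EFinP; apply: measurable_funS (continuous_measurable_fun cfc).
rewrite [RHS]integral_itv_obnd_cbnd; last first.
  by apply/measurable_EFinP; apply: measurable_funS (continuous_measurable_fun cf).
rewrite (@integration_by_substitution_increasing R (shift c) f a b ab).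
- by apply: eq_integral => x _; rewrite d1 /= mulr1.
- by move=> x y _ _; rewrite ltrD2r.
- by move=> x _; rewrite d1; exact: cst_continuous.
- by rewrite d1; exact: is_cvg_cst.
- by rewrite d1; exact: is_cvg_cst.
- split.
  + by move=> x _; apply: derivableD; [exact: derivable_id|exact: derivable_cst].
  + exact: cvg_at_right_filter (csh _).
  + exact: cvg_at_left_filter (csh _).
- by apply: continuous_subspaceT.
Qed.

End interval_integrals.

Section quadratic_increments.
Context {R : archiRealFieldType}.
Variables (L : R -> R) (C v w : R).
Hypothesis vw : v <= w.
Hypothesis L_incr : forall x y, v <= x -> x <= y -> y <= w ->
  L y - L x <= C * (y - x) ^+ 2.

Let uniform_partition_bound n : L w - L v <= C * (w - v) ^+ 2 / n.+1%:R.
Proof.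
have n0 : n.+1%:R != 0 :> R by rewrite pnatr_eq0.
set h := (w - v) / n.+1%:R.
have h0 : 0 <= h by rewrite divr_ge0 ?subr_ge0.
have nh : n.+1%:R * h = w - v by rewrite mulrC divfK.
have partial j : (j <= n.+1)%N -> L (v + j%:R * h) - L v <= j%:R * (C * h ^+ 2).
  elim: j => [|j IH] jn; first by rewrite !mul0r addr0 subrr.
  have jh : j.+1%:R * h <= w - v by rewrite -nh ler_wpM2r// ler_nat.
  have := L_incr (v + j%:R * h) (v + j.+1%:R * h).
  rewrite -natr1 !mulrDl !mul1r addrA (addrC (_ + _) h) addrK.
  have := IH (ltnW jn).
  have := ler_wpM2r h0 (ler0n R j).
  rewrite -natr1 mulrDl mul1r in jh; lra.
have := partial n.+1 (leqnn _); rewrite nh addrCA subrr addr0.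
suff -> : C * (w - v) ^+ 2 / n.+1%:R = n.+1%:R * (C * h ^+ 2) by [].
by rewrite /h; field; rewrite addrC natr1.
Qed.

Lemma le_quadratic_increments : L w <= L v.
Proof.
rewrite -subr_le0 leNgt; apply/negP => d0.
set d := L w - L v in d0; set D := C * (w - v) ^+ 2.
have := uniform_partition_bound (Num.truncn (`|D| / d)).
have := truncnS_gt (`|D| / d); set m := (Num.truncn _).+1%:R => Dm.
have m0 : 0 < m by rewrite ltr0n.
rewrite ler_pdivlMr// -/d -/D ltr_pdivrMr// in Dm * => dD.
have := ler_norm D; lra.
Qed.

End quadratic_increments.

Section delay_inequality.
Context {R : realType}.
Local Notation mu := (@lebesgue_measure R).
Variables (k : R -> R) (s c : R).
Hypothesis s_ge0 : 0 <= s.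
Hypothesis s_le1 : s <= 1.
Hypothesis k_ge0 : forall x, 0 <= k x.
Hypothesis k_ub : forall a b, has_ubound (k @` `[a, b]).
Hypothesis k_int : forall v, mu.-integrable `]v, v + 1] (EFin \o k).
Hypothesis k_delay : forall v, v <= 0 ->
  k v <= s * \int[mu]_(t in `]v, v + 1]) k t - c.

Let B n := sup (k @` `[- n%:R, 1 - n%:R]).

Let B_ub n x : - n%:R <= x -> x <= 1 - n%:R -> k x <= B n.
Proof.
move=> nx xn; apply: sup_upper_bound; last by exists x; rewrite //= in_itv/= nx xn.
split; last exact: k_ub.
by exists (k x), x; rewrite //= in_itv/= nx xn.
Qed.

Let B_ge0 n : 0 <= B n.
Proof. by apply: le_trans (k_ge0 (- n%:R)) _; apply: B_ub; lra. Qed.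

(* For x in [-n-1, -n], k is bounded on [x, x + 1] by [Num.max (B n.+1) (B n)];
   as s <= 1, this maximum cannot be B n.+1. *)
Let B_step n : 0 < c -> B n.+1 <= B n - c.
Proof.
move=> c_gt0; set M := Num.max (B n.+1) (B n).
have M_ge0 : 0 <= M by rewrite le_max B_ge0.
have : B n.+1 <= s * M - c.
  apply: ge_sup; first by exists (k (- n.+1%:R)), (- n.+1%:R); rewrite //= in_itv/=; lra.
  move=> _ [x + <-]; rewrite /= in_itv/= -natr1 => /andP[nx xn].
  apply: le_trans (k_delay _ _) _; first by have := ler0n R n; lra.
  rewrite lerD2r ler_wpM2l//.
  have : \int[mu]_(t in `]x, x + 1]) k t <= M * (x + 1 - x).
    apply: Rintegral_itv_le_cst => //; first by rewrite lerDl.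
    move=> t /andP[xt tx]; have [tn|tn] := leP t (- n%:R).
    - have : k t <= B n.+1 by apply: B_ub; rewrite -natr1; lra.
      by move/le_trans; apply; rewrite le_max lexx.
    - have : k t <= B n by apply: B_ub; lra.
      by move/le_trans; apply; rewrite le_max lexx orbT.
  by rewrite [x + 1 - x]addrC addKr mulr1.
have : s * M <= M by rewrite ler_piMl.
have [/max_idPr|/ltW/max_idPl] := leP (B n.+1) (B n); rewrite -/M => -> /=; lra.
Qed.

Lemma delay_inequality_le0 : c <= 0.
Proof.
rewrite leNgt; apply/negP => c_gt0.
have B_lin n : B n <= B 0 - n%:R * c.
  elim: n => [|n IH]; first by rewrite mul0r subr0.
  by have := B_step n c_gt0; rewrite -natr1; lra.
set n := Num.truncn (B 0 / c); have := B_lin n.+1; have := B_ge0 n.+1.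
have := truncnS_gt (B 0 / c); rewrite -/n ltr_pdivrMr//; lra.
Qed.

End delay_inequality.

Section cumulative.
Context {R : realType}.
Local Notation mu := (@lebesgue_measure R).
Variable G : R -> R.
Hypothesis G_nd : {homo G : x y / x <= y}.
Hypothesis G_ge0 : forall x, 0 <= G x.
Hypothesis G_int : forall x, mu.-integrable `]-oo, x] (EFin \o G).

Definition cumulative x := \int[mu]_(t in `]-oo, x]) G t.

Lemma cumulativeE x :
  (\int[mu]_(t in `]-oo, x]) (G t)%:E)%E = (cumulative x)%:E.
Proof. by rewrite /cumulative /Rintegral fineK// integrable_fin_num. Qed.

Lemma measurable_fun_G (D : set R) : measurable D -> measurable_fun D G.
Proof. by move=> mD; exact: nondecreasing_measurable. Qed.

Lemma integrable_itv_G a b : mu.-integrable `]a, b] (EFin \o G).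
Proof. by apply: integrableS (G_int b) => //; exact: subset_itvr. Qed.

Lemma cumulativeB a b : a <= b ->
  cumulative b - cumulative a = \int[mu]_(t in `]a, b]) G t.
Proof. by move=> ab; apply: Rintegral_itvB; rewrite ?bnd_simp. Qed.

Lemma cumulative_ge0 x : 0 <= cumulative x.
Proof. exact: Rintegral_ge0. Qed.

Lemma cumulative_nd : {homo cumulative : x y / x <= y}.
Proof. by move=> a b ab; rewrite -subr_ge0 cumulativeB//; exact: Rintegral_ge0. Qed.

Lemma cumulativeB_le {a b} : a <= b -> cumulative b - cumulative a <= G b * (b - a).
Proof.
move=> ab; rewrite cumulativeB//; apply: Rintegral_itv_le_cst => //.
  exact: integrable_itv_G.
by move=> x /andP[_ /G_nd].
Qed.

Lemma continuous_cumulative : continuous cumulative.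
Proof.
move=> x; apply/cvgrPdist_le => /= e e0.
have G1_gt0 : 0 < G (x + 1) + 1 by rewrite ltr_pwDr ?G_ge0.
apply/nbhs_ballP; exists (Num.min 1 (e / (G (x + 1) + 1))).
  by rewrite /= lt_min ltr01 divr_gt0.
move=> t /=; rewrite /ball /= lt_min => /andP[xt1 xte].
have Lip (y z : R) : y <= z -> z <= x + 1 ->
    `|cumulative y - cumulative z| <= (G (x + 1) + 1) * (z - y).
  move=> yz zx; rewrite distrC ger0_norm ?subr_ge0 ?cumulative_nd//.
  apply: (le_trans (cumulativeB_le yz)); rewrite ler_wpM2r ?subr_ge0//.
  by rewrite ler_wpDr ?ler01// G_nd.
rewrite ltr_pdivlMr// mulrC in xte.
have [xt|tx] := leP x t.
- rewrite distrC ger0_norm ?subr_ge0// in xt1 xte.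
  by apply: (le_trans (Lip _ _ xt _)); [lra|exact: ltW].
- rewrite ger0_norm ?subr_ge0 ?ltW// in xt1 xte.
  by rewrite distrC; apply: (le_trans (Lip _ _ (ltW tx) _)); [lra|exact: ltW].
Qed.

End cumulative.

Section exponential_damping.
Context {R : realType}.
Local Notation mu := (@lebesgue_measure R).
Variable s : R.
Hypothesis s_ge0 : 0 <= s.

Definition expdecay (t : R) := expR (- (s * t)).

Lemma expdecay_gt0 t : 0 < expdecay t.
Proof. exact: expR_gt0. Qed.

Lemma expdecay_ni x y : x <= y -> expdecay y <= expdecay x.
Proof. by move=> xy; rewrite ler_expR lerN2 ler_wpM2l. Qed.

Lemma expdecayD x h : expdecay (x + h) = expdecay x * expR (- (s * h)).
Proof. by rewrite /expdecay -expRD mulrDr opprD. Qed.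

Lemma continuous_expdecay : continuous expdecay.
Proof.
move=> x; apply: continuous_comp; last exact: continuous_expR.
by apply: continuousN; apply: continuousM; [exact: cst_continuous|exact: cvg_id].
Qed.

Variable G : R -> R.
Hypothesis G_nd : {homo G : x y / x <= y}.
Hypothesis G_ge0 : forall x, 0 <= G x.
Hypothesis G_int : forall x, mu.-integrable `]-oo, x] (EFin \o G).
Local Notation F := (cumulative G).

Definition damped t := expdecay t * F t.

Lemma damped_ge0 t : 0 <= damped t.
Proof. by rewrite mulr_ge0 ?cumulative_ge0// ltW ?expdecay_gt0. Qed.

Lemma continuous_damped : continuous damped.
Proof.
move=> x; apply: continuousM; first exact: continuous_expdecay.
exact: continuous_cumulative.
Qed.

Lemma damped_le x y t : x <= t -> t <= y -> damped t <= expdecay x * F y.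
Proof.
move=> xt ty; rewrite /damped; apply: ler_pM.
- exact/ltW/expdecay_gt0.
- exact: cumulative_ge0.
- exact: expdecay_ni.
- exact: cumulative_nd.
Qed.

Lemma integrable_itv_damped x y : mu.-integrable `]x, y] (EFin \o damped).
Proof.
apply: (@integrable_itv_bounded _ _ _ _ (expdecay x * F y)).
  apply: measurable_funS (continuous_measurable_fun continuous_damped) => //.
move=> t /andP[xt ty]; rewrite ger0_norm ?damped_ge0//.
by apply: damped_le => //; exact: ltW.
Qed.

Lemma integrable_itv_expdecayG x y :
  mu.-integrable `]x, y] (EFin \o (fun t => expdecay t * G t)).
Proof.
apply: (@integrable_itv_bounded _ _ _ _ (expdecay x * G y)).
  apply: measurable_funM; last exact: measurable_fun_G.
  apply: measurable_funS (continuous_measurable_fun continuous_expdecay) => //.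
move=> t /andP[/ltW xt ty] /=.
rewrite ger0_norm; last by rewrite mulr_ge0// ltW// expdecay_gt0.
apply: ler_pM => //; [exact/ltW/expdecay_gt0|exact: expdecay_ni|exact: G_nd].
Qed.

Lemma damped_increment {x y} : x <= y ->
  \int[mu]_(t in `]x, y]) (expdecay t * G t) - (damped y - damped x)
    - s * \int[mu]_(t in `]x, y]) damped t
  <= s * expdecay x * (G y + s * F y) * (y - x) ^+ 2.
Proof.
move=> xy; set h := y - x; have h0 : 0 <= h by rewrite subr_ge0.
set e := expR (- (s * h)).
have ay : expdecay y = expdecay x * e by rewrite -expdecayD /h addrC subrK.
have e_le1 : e <= 1 by rewrite -expR0 ler_expR oppr_le0 mulr_ge0.
have e_ge : 1 - s * h <= e by exact: expR_ge1Dx.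
have int_expdecayG_le : \int[mu]_(t in `]x, y]) (expdecay t * G t) <= expdecay x * (F y - F x).
  rewrite cumulativeB// -RintegralZl//; last exact: integrable_itv_G.
  apply: le_Rintegral => //; first exact: integrable_itv_expdecayG.
    apply: (@integrable_itv_bounded _ _ _ _ (expdecay x * G y)).
      by apply: measurable_funM; [exact: measurable_cst|exact: measurable_fun_G].
    move=> t /andP[_ ty]; rewrite ger0_norm ?mulr_ge0//; last exact/ltW/expdecay_gt0.
    by rewrite ler_wpM2l ?G_nd//; exact/ltW/expdecay_gt0.
  move=> t /= /[!in_itv]/= /andP[/ltW xt _].
  by apply: ler_wpM2r => //; exact: expdecay_ni.
have int_damped_ge : expdecay y * F x * h <= \int[mu]_(t in `]x, y]) damped t.
  apply: Rintegral_itv_ge_cst => //; first exact: integrable_itv_damped.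
  move=> t /andP[/ltW xt ty]; apply: ler_pM.
  - exact/ltW/expdecay_gt0.
  - exact: cumulative_ge0.
  - exact: expdecay_ni.
  - exact: cumulative_nd.
have F_incr : F y - F x <= G y * h by exact: cumulativeB_le.
have Fxy : F x <= F y by exact: cumulative_nd.
have Fx0 : 0 <= F x by exact: cumulative_ge0.
have ax0 : 0 < expdecay x by exact: expdecay_gt0.
have cross_term : (1 - e) * (F y - F x) <= (s * h) * (G y * h).
  by apply: ler_pM; rewrite ?subr_ge0; lra.
have curvature_term : F x * (1 - e * (1 + s * h)) <= F y * (s * h) ^+ 2.
  apply: (@le_trans _ _ (F x * (s * h) ^+ 2)); last by rewrite ler_wpM2r ?sqr_ge0.
  apply: ler_wpM2l => //.
  have : (1 - s * h) * (1 + s * h) <= e * (1 + s * h).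
    by rewrite ler_wpM2r// addr_ge0 ?mulr_ge0.
  by rewrite expr2; lra.
rewrite /damped ay.
set X := \int[mu]_(t in `]x, y]) _ in int_expdecayG_le *.
set Y := \int[mu]_(t in `]x, y]) _ in int_damped_ge *.
have sY : s * (expdecay x * e * F x * h) <= s * Y by rewrite -ay; exact: ler_wpM2l.
have : expdecay x * ((1 - e) * (F y - F x) + F x * (1 - e * (1 + s * h)))
    <= expdecay x * ((s * h) * (G y * h) + F y * (s * h) ^+ 2).
  by apply: ler_wpM2l; [exact: ltW|lra].
by rewrite -/h; lra.
Qed.

(* F need not be differentiable, G being merely monotone; instead of the
   fundamental theorem of calculus we sum the local errors of [damped_increment],
   which are quadratic in the step. *)
Lemma expdecay_ibp {v w} : v <= w ->
  \int[mu]_(t in `]v, w]) (expdecay t * G t)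
    <= damped w - damped v + s * \int[mu]_(t in `]v, w]) damped t.
Proof.
move=> vw.
pose L x := \int[mu]_(t in `]v, x]) (expdecay t * G t) - damped x
  - s * \int[mu]_(t in `]v, x]) damped t.
suff : L w <= L v.
  have vv : `]v, v]%classic = set0 :> set R by rewrite set_itv_ge// bnd_simp ltxx.
  by rewrite /L vv !Rintegral_set0; clear L; lra.
apply: (@le_quadratic_increments _ L (s * expdecay v * (G w + s * F w))) => // x y vx xy yw.
have -> : L y - L x = \int[mu]_(t in `]x, y]) (expdecay t * G t)
    - (damped y - damped x) - s * \int[mu]_(t in `]x, y]) damped t.
  rewrite /L (Rintegral_itv_split vx xy (integrable_itv_expdecayG _ _)).
  by rewrite (Rintegral_itv_split vx xy (integrable_itv_damped _ _)); clear L; ring.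
apply: le_trans (damped_increment xy) _; apply: ler_wpM2r; first exact: sqr_ge0.
rewrite -!mulrA; apply: ler_wpM2l => //; apply: ler_pM.
- exact/ltW/expdecay_gt0.
- by rewrite addr_ge0 ?mulr_ge0 ?cumulative_ge0.
- exact: expdecay_ni.
- by rewrite lerD ?ler_wpM2l ?G_nd ?cumulative_nd.
Qed.

Section tight_profile.
Hypothesis s_le1 : s <= 1.
Hypothesis tightness : forall t : R, t <= 0 -> s * F (t + 1) = expR s * G t.

Lemma expdecayG_shift t : t <= 0 -> expdecay t * G t = s * damped (t + 1).
Proof.
move=> t0; rewrite /damped mulrCA tightness// mulrA expdecayD mulr1 -!mulrA.
by rewrite (mulrA (expR (- s))) -expRD addNr expR0 mul1r.
Qed.

Definition deficit := \int[mu]_(t in `]0, 1]) (expdecay t * G t) - damped 1.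

Lemma damped_delay v : v <= 0 ->
  damped v <= s * \int[mu]_(t in `]v, v + 1]) damped t - deficit.
Proof.
move=> v0; have v1 : v + 1 <= 1 by rewrite gerDr.
have vv1 : v <= v + 1 by rewrite lerDl.
have := expdecay_ibp (le_trans v0 ler01).
rewrite (Rintegral_itv_split v0 ler01 (integrable_itv_expdecayG _ _)).
rewrite (Rintegral_itv_split vv1 v1 (integrable_itv_damped _ _)).
have shift : \int[mu]_(t in `]v, 0]) (expdecay t * G t)
    = s * \int[mu]_(t in `]v + 1, 0 + 1]) damped t.
  rewrite -Rintegral_itv_shift//; last exact: continuous_damped.
  rewrite -RintegralZl//; last first.
    apply: (@integrable_itv_bounded _ _ _ _ (expdecay v * F 1)).
      apply: measurable_funS (continuous_measurable_fun _) => //.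
      exact/continuous_addr/continuous_damped.
    move=> t /andP[vt t0]; rewrite ger0_norm ?damped_ge0//.
    by apply: damped_le; lra.
  by apply: eq_Rintegral => t; rewrite inE/= in_itv/= => /andP[_ /expdecayG_shift].
rewrite shift add0r.
by rewrite /deficit; lra.
Qed.

Lemma deficit_le0 : deficit <= 0.
Proof.
apply: (@delay_inequality_le0 _ damped s) => //.
- exact: damped_ge0.
- move=> a b; exists (expdecay a * F b) => _ [t + <-].
  rewrite /= in_itv/= => /andP[a_t t_b].
  exact: damped_le.
- by move=> v; exact: integrable_itv_damped.
- exact: damped_delay.
Qed.

End tight_profile.

End exponential_damping.

Lemma bidding_profile_integrable {R : realType} {rho chi : R} {G : R -> R} :
  bidding_profile rho chi G ->
  forall x, (@lebesgue_measure R).-integrable `]-oo, x] (EFin \o G).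
Proof.
move=> [_ [G_nd [_ [G_gt0 [_ [robust _]]]]]] x.
apply/integrableP; split.
  by apply/measurable_EFinP; apply: nondecreasing_measurable => // ? ? /G_nd.
have -> : (\int[lebesgue_measure]_(t in `]-oo, x]) `|(EFin \o G) t|)%E
    = (\int[lebesgue_measure]_(t in `]-oo, x]) (G t)%:E)%E.
  by apply: eq_integral => t _; rewrite /= ger0_norm// ltW.
by have := robust (x - 1); rewrite subrK => /le_lt_trans; apply; exact: ltry.
Qed.

Theorem lemma8 (R : realType) (s chi : R) (G phi : R -> R) :
  0 < s -> s <= 1 ->
  tight_bidding_profile (rho_s s) chi G ->
  induced_by G phi ->
  (@lebesgue_measure R).-integrable `]0%R, 1%R] (EFin \o phi) ->
  ((expR s)%:E * \int[@lebesgue_measure R]_(x in `]0%R, 1%R]) (expR (- (s * x)) * phi x)%:E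
     <= chi%:E)%E.
Proof.
move=> s_gt0 s_le1 [profile [tight consistent]] [_ G_phi] _.
have [_ [G_nd [_ [G_gt0 _]]]] := profile.
have G_ge0 x : 0 <= G x by exact: ltW.
have G_int := bidding_profile_integrable profile.
have tightness (t : R) : t <= 0 -> s * cumulative G (t + 1) = expR s * G t.
  move=> t0; have := tight t t0; rewrite cumulativeE// => -[->].
  by rewrite /rho_s mulrA mulrCA divff ?mulr1 ?gt_eqF.
have chiE : cumulative G 1 = chi by have := consistent; rewrite cumulativeE// => -[].
have : deficit s G <= 0 by apply: deficit_le0 => //; exact: ltW.
rewrite /deficit /damped chiE.
have -> : (\int[@lebesgue_measure R]_(x in `]0%R, 1%R]) (expR (- (s * x)) * phi x)%:E)%E
    = (\int[@lebesgue_measure R]_(t in `]0, 1]) (expdecay s t * G t))%:E.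
  rewrite /Rintegral fineK; last first.
    by apply: integrable_fin_num => //; apply: integrable_itv_expdecayG => //; exact: ltW.
  by apply: eq_integral => x; rewrite inE/= in_itv/= => /G_phi ->.
rewrite -EFinM lee_fin => deficit_le0.
rewrite /expdecay mulr1 in deficit_le0.
have : expR s * \int[@lebesgue_measure R]_(t in `]0, 1]) (expdecay s t * G t)
    <= expR s * (expR (- s) * chi) by rewrite ler_wpM2l ?expR_ge0//; lra.
by rewrite mulrA -expRD subrr expR0 mul1r.
Qed.
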